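(* In the setting of the context, let $\nu$ be a probability measure on $M$ with $$\int f_k\,d\nu=0,\qquad \int f_k^2\,d\nu=1,\qquad \int \Gamma(f_k)\,d\nu\le \lambda_k(\mu),$$ (it automatically satisfies the improved Poincaré inequality $\int f^2d\nu\le \frac{1}{\lambda_k(\nu)}\int\Gamma(f)d\nu$ for all $f\in H^1(\nu)\cap E_{k-1}^\perp$). Then for all $g\in H^1(\nu)\cap E_{k-1}^{\perp}$, $$\left|\int\bigl(\lambda_k(\nu)\,p_k^\perp g-\Gamma(p_k^\perp,g)\bigr)\,d\nu\right|\le\Bigl[\lambda_k(\mu)-\lambda_k(\nu)+\sum_{i=1}^{k-1}\bigl(\lambda_k(\nu)-\lambda_i(\nu)\bigr)\,d(f_k,Sp_i(\nu)^\perp)^2\Bigr]^{1/2}\sqrt{\int\Gamma(g)\,d\nu}.$$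
   Context: $L$ is a Markov generator on a state space $M$, reversible with respect to a probability measure $\mu$, with carré du champ operator $\Gamma(f,g)=\frac12\bigl(L(fg)-fLg-gLf\bigr)$, $\Gamma(f)=\Gamma(f,f)$. Let $0<\lambda_1(\mu)<\lambda_2(\mu)<\cdots$ be the eigenvalues of $-L$ counted without multiplicity, fix $k\ge1$, and let $f_k$ satisfy $-Lf_k=\lambda_k(\mu)f_k$, $\int f_k\,d\mu=0$, $\int f_k^2\,d\mu=1$. For a probability measure $\nu$ on $M$ define $H^1(\nu)=\{f\in L^2(\nu):\int f\,d\nu=0,\ \int\Gamma(f)\,d\nu<\infty\}$. Set $E_0=\{0\}$ and recursively, for $m\ge0$, with $\perp$ denoting orthogonal complement in $L^2(\nu)$: $$\lambda_{m+1}(\nu)=\inf_{f\in H^1(\nu)\cap E_m^\perp,\ f\neq 0}\frac{\int\Gamma(f)\,d\nu}{\int f^2\,d\nu},$$ $$Sp_{m+1}(\nu)=\Bigl\{f\in H^1(\nu)\cap E_m^\perp:\ \forall g\in H^1(\nu)\cap E_m^\perp,\ \int fg\,d\nu=\tfrac{1}{\lambda_{m+1}(\nu)}\int\Gamma(f,g)\,d\nu\Bigr\},$$ and $E_{m+1}=Sp_1(\nu)\oplus\cdots\oplus Sp_{m+1}(\nu)$. Decompose $f_k=p_k+p_k^\perp$ where $p_k$ is the $L^2(\nu)$-orthogonal projection of $f_k$ onto $E_{k-1}$ and $p_k^\perp\in E_{k-1}^\perp$, and write $p_k=p_k^1+\dots+p_k^{k-1}$ with $p_k^i\in Sp_i(\nu)$.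 Define $d(f_k,Sp_i(\nu)^\perp)^2:=\int (p_k^i)^2\,d\nu$ (the squared $L^2(\nu)$-distance from $f_k$ to $Sp_i(\nu)^\perp$). *)

From HB Require Import structures.
From mathcomp Require Import all_boot all_order all_algebra.
From mathcomp Require Import all_classical all_reals all_analysis.
Set Implicit Arguments. Unset Strict Implicit. Unset Printing Implicit Defensive.
Import Order.TTheory GRing.Theory Num.Theory.
Import numFieldNormedType.Exports.
Local Open Scope classical_set_scope.
Local Open Scope ring_scope.

Section MarkovDefs.
Context {d : measure_display} {M : measurableType d} {R : realType}.

Definition Gamma (L : (M -> R) -> (M -> R)) (f g : M -> R) : M -> R :=
  fun x => (L (f \* g) x - f x * L g x - g x * L f x) / 2.

Definition function_algebra (A : set (M -> R)) : Prop :=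
  [/\ forall f, A f -> measurable_fun setT f,
      forall c : R, A (fun _ => c),
      forall f g, A f -> A g -> A (f \+ g),
      forall (a : R) f, A f -> A (fun x => a * f x)
    & forall f g, A f -> A g -> A (f \* g)].

(* L is a Markov generator on the algebra A: a linear operator on A,
   with measurable values, conservative (L 1 = 0) and satisfying the
   positive maximum principle (the characterization of generators of
   Markov semigroups). *)
Definition markov_generator (A : set (M -> R)) (L : (M -> R) -> (M -> R)) : Prop :=
  function_algebra A /\ (forall f, A f -> measurable_fun setT (L f)) /\
  [/\ forall f g, A f -> A g -> L (f \+ g) = L f \+ L g,
      forall (a : R) f, A f -> L (fun x => a * f x) = (fun x => a * L f x),
      L (fun _ => 1) = (fun _ => 0)
    & forall f x, A f -> (forall y, f y <= f x) -> 0 <= f x -> L f x <= 0].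

Definition reversible (A : set (M -> R)) (L : (M -> R) -> (M -> R))
  (mu : probability M R) : Prop :=
  forall f g, A f -> A g ->
    mu.-integrable setT (fun x => (f x * L g x)%:E) ->
    mu.-integrable setT (fun x => (g x * L f x)%:E) ->
    (\int[mu]_x (f x * L g x)%:E = \int[mu]_x (g x * L f x)%:E)%E.

Definition eigenfun (A : set (M -> R)) (L : (M -> R) -> (M -> R))
  (mu : probability M R) (lam : R) (f : M -> R) : Prop :=
  [/\ A f, mu.-integrable setT (fun x => (f x ^+ 2)%:E),
      (0 < \int[mu]_x (f x ^+ 2)%:E)%E
    & {ae mu, forall x, - L f x = lam * f x}].

Definition eigenvalue A L mu (lam : R) : Prop := exists f, eigenfun A L mu lam f.

(* lamseq 1 < ... < lamseq k are the k smallest positive eigenvalues of -L,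
   counted without multiplicity. *)
Definition first_eigenvalues A L mu (k : nat) (lamseq : nat -> R) : Prop :=
  [/\ 0 < lamseq 1%N,
      forall i, (1 <= i < k)%N -> lamseq i < lamseq i.+1,
      forall i, (1 <= i <= k)%N -> eigenvalue A L mu (lamseq i)
    & forall lam, eigenvalue A L mu lam -> 0 < lam -> lam <= lamseq k ->
        exists2 i, (1 <= i <= k)%N & lam = lamseq i].

Section Nu.
Variables (A : set (M -> R)) (L : (M -> R) -> (M -> R)) (nu : probability M R).

Definition H1 (f : M -> R) : Prop :=
  [/\ A f,
      (\int[nu]_x (f x ^+ 2)%:E < +oo)%E,
      (\int[nu]_x (f x)%:E = 0)%E
    & (\int[nu]_x (Gamma L f f x)%:E < +oo)%E].

Definition orth (E : set (M -> R)) : set (M -> R) :=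
  [set f | forall e, E e -> \int[nu]_x (f x * e x) = 0].

Definition lamE (E : set (M -> R)) : R :=
  inf [set \int[nu]_x (Gamma L f f x) / \int[nu]_x (f x ^+ 2) |
       f in [set f | H1 f /\ orth E f /\ (0 < \int[nu]_x (f x ^+ 2)%:E)%E]].

Definition SpE (E : set (M -> R)) : set (M -> R) :=
  [set f | H1 f /\ orth E f /\
     forall g, H1 g -> orth E g ->
       \int[nu]_x (Gamma L f g x) = lamE E * \int[nu]_x (f x * g x)].

Fixpoint Espace (m : nat) : set (M -> R) :=
  match m with
  | 0%N => [set (fun _ => 0)]
  | m'.+1 => [set e \+ s | e in Espace m' & s in SpE (Espace m')]
  end.

(* lambda_m(nu) and Sp_m(nu), meaningful for m >= 1 *)
Definition lam_nu (m : nat) : R := lamE (Espace m.-1).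
Definition Sp (m : nat) : set (M -> R) := SpE (Espace m.-1).

End Nu.
End MarkovDefs.

From HB Require Import structures.
From mathcomp Require Import all_boot all_order all_algebra.
From mathcomp Require Import all_classical all_reals all_analysis.
From mathcomp Require Import measurable_realfun ring lra.
Import Order.TTheory GRing.Theory Num.Theory.
Import numFieldNormedType.Exports.
Local Open Scope classical_set_scope.
Local Open Scope ring_scope.

(* Put Q(f, g) = \int Gamma(f, g) dnu - lambda_k(nu) \int f g dnu.  Since lambda_k(nu) is the
   infimum of the Rayleigh quotients on H^1(nu) /\ E_(k-1)^perp, Q is positive semidefinite
   there, so by Cauchy-Schwarz the left-hand side |Q(p_k^perp, g)| is at most
   sqrt Q(p_k^perp, p_k^perp) * sqrt Q(g, g), and Q(g, g) <= \int Gamma(g) dnu.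
   The p_k^i are orthogonal for both forms: Gamma-orthogonal to E_(k-1)^perp, with
   \int Gamma(p_k^i) dnu = lambda_i(nu) |p_k^i|^2.  Pythagoras for f_k = p_k^perp + sum_i p_k^i
   then gives Q(p_k^perp, p_k^perp) = \int Gamma(f_k) dnu - sum_i lambda_i(nu) |p_k^i|^2
   - lambda_k(nu) (1 - sum_i |p_k^i|^2), which is at most the bracket because
   \int Gamma(f_k) dnu <= lambda_k(mu); nothing else about mu or f_k is used. *)

Section MarkovGenerator.
Context {d : measure_display} {M : measurableType d} {R : realType}.
Context {A : set (M -> R)} {L : (M -> R) -> (M -> R)}.

Lemma Gamma_sym f g : Gamma L f g = Gamma L g f.
Proof.
apply/funext => x; rewrite /Gamma.
have -> : f \* g = g \* f by apply/funext => y /=; rewrite mulrC.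
ring.
Qed.

Hypothesis hL : markov_generator A L.

Lemma A_measurable {f} : A f -> measurable_fun setT f.
Proof. by case: hL => [[P _ _ _ _] _]; apply: P. Qed.
Lemma A_cst (c : R) : A (fun _ => c).
Proof. by case: hL => [[_ P _ _ _] _]; apply: P. Qed.
Lemma A_add {f g} : A f -> A g -> A (f \+ g).
Proof. by case: hL => [[_ _ P _ _] _]; apply: P. Qed.
Lemma A_scale (a : R) {f} : A f -> A (fun x => a * f x).
Proof. by case: hL => [[_ _ _ P _] _]; apply: P. Qed.
Lemma A_mul {f g} : A f -> A g -> A (f \* g).
Proof. by case: hL => [[_ _ _ _ P] _]; apply: P. Qed.
Lemma L_measurable {f} : A f -> measurable_fun setT (L f).
Proof. by case: hL => _ [P _]; apply: P. Qed.
Lemma L_add {f g} : A f -> A g -> L (f \+ g) = L f \+ L g.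
Proof. by case: hL => _ [_ [P _ _ _]]; apply: P. Qed.
Lemma L_scale (a : R) {f} : A f -> L (fun x => a * f x) = (fun x => a * L f x).
Proof. by case: hL => _ [_ [_ P _ _]]; apply: P. Qed.
Lemma L_maximum {f} x : A f -> (forall y, f y <= f x) -> 0 <= f x -> L f x <= 0.
Proof. by case: hL => _ [_ [_ _ _ P]]; apply: P. Qed.

Lemma L_cst (c : R) : L (fun _ => c) = (fun _ => 0).
Proof.
have -> : (fun _ : M => c) = (fun x => c * (fun _ => 1) x).
  by apply/funext => x; rewrite mulr1.
rewrite (L_scale _ (A_cst 1)); case: hL => _ [_ [_ _ -> _]].
by apply/funext => x; rewrite mulr0.
Qed.

Lemma GammaDl {f g h} : A f -> A g -> A h ->
  forall x, Gamma L (f \+ g) h x = Gamma L f h x + Gamma L g h x.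
Proof.
move=> Af Ag Ah x; rewrite /Gamma.
have -> : (f \+ g) \* h = (f \* h) \+ (g \* h) by apply/funext => y /=; rewrite mulrDl.
rewrite (L_add (A_mul Af Ah) (A_mul Ag Ah)) (L_add Af Ag) /=; ring.
Qed.

Lemma GammaZl (a : R) {f h} : A f -> A h ->
  forall x, Gamma L (fun y => a * f y) h x = a * Gamma L f h x.
Proof.
move=> Af Ah x; rewrite /Gamma.
have -> : (fun y => a * f y) \* h = (fun y => a * (f \* h) y).
  by apply/funext => y /=; rewrite mulrA.
rewrite (L_scale _ (A_mul Af Ah)) (L_scale _ Af) /=; ring.
Qed.

Lemma Gamma0l {h} x : A h -> Gamma L (fun _ => 0) h x = 0.
Proof.
move=> Ah; rewrite /Gamma.
have -> : (fun _ : M => 0) \* h = (fun y => 0 * h y) by apply/funext => y /=.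
rewrite (L_scale _ Ah) L_cst /=; ring.
Qed.

(* Positive maximum principle at x for y |-> -(f y - f x)^2, whose image under L at x
   is -2 Gamma(f,f)(x). *)
Lemma Gamma_ge0 {f} x : A f -> 0 <= Gamma L f f x.
Proof.
move=> Af.
have Aff := A_mul Af Af.
have A1 := A_scale (-1) Aff.
have A2 := A_scale (2 * f x) Af.
have A3 := A_cst (- f x ^+ 2).
pose h := (fun y => (-1) * (f \* f) y) \+
          ((fun y => (2 * f x) * f y) \+ (fun _ => - f x ^+ 2)).
have Ah : A h by apply: A_add A1 (A_add A2 A3).
have hx : h x = 0 by rewrite /h /=; ring.
have h_max : forall y, h y <= h x.
  move=> y; rewrite hx /h /=.
  have := sqr_ge0 (f y - f x); rewrite !expr2; nra.
have := L_maximum x Ah h_max; rewrite hx lexx => /(_ isT).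
rewrite /h (L_add A1 (A_add A2 A3)) (L_add A2 A3) (L_scale _ Aff) (L_scale _ Af).
rewrite L_cst /Gamma /= => Lh_le0.
by apply: divr_ge0 => //; lra.
Qed.

Lemma Gamma_measurable {f g} : A f -> A g -> measurable_fun setT (Gamma L f g).
Proof.
move=> Af Ag; rewrite /Gamma.
apply: measurable_funM => //.
apply: measurable_funB; first apply: measurable_funB.
- exact: L_measurable (A_mul Af Ag).
- by apply: measurable_funM; [exact: A_measurable | exact: L_measurable].
- by apply: measurable_funM; [exact: A_measurable | exact: L_measurable].
Qed.

Lemma GammaDD {f g} x : A f -> A g ->
  Gamma L (f \+ g) (f \+ g) x = Gamma L f f x + 2 * Gamma L f g x + Gamma L g g x.
Proof.
move=> Af Ag; have Afg := A_add Af Ag.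
rewrite (GammaDl Af Ag Afg) (Gamma_sym f) (Gamma_sym g).
rewrite (GammaDl Af Ag Af) (GammaDl Af Ag Ag) (Gamma_sym g f); ring.
Qed.

Lemma GammaZZ a {f} x : A f ->
  Gamma L (fun y => a * f y) (fun y => a * f y) x = a ^+ 2 * Gamma L f f x.
Proof.
move=> Af; rewrite (GammaZl _ Af (A_scale a Af)) (Gamma_sym f) (GammaZl _ Af Af); ring.
Qed.

Lemma Gamma_norm_le {f g} x : A f -> A g ->
  `|Gamma L f g x| <= Gamma L f f x + Gamma L g g x.
Proof.
move=> Af Ag.
have Ag' := A_scale (-1) Ag.
have hD := Gamma_ge0 x (A_add Af Ag).
have hB := Gamma_ge0 x (A_add Af Ag').
rewrite GammaDD // in hD; rewrite GammaDD // GammaZZ // in hB.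
rewrite (Gamma_sym f) (GammaZl _ Ag Af) (Gamma_sym g) in hB.
rewrite ler_norml; apply/andP; split; lra.
Qed.

Variable nu : probability M R.
Local Notation H := (H1 A L nu).
Local Notation integrableR f := (nu.-integrable setT (EFin \o f)).

Definition inner (f g : M -> R) := \int[nu]_x (f x * g x).
Definition dirichlet (f g : M -> R) := \int[nu]_x Gamma L f g x.

Lemma H1_A {f} : H f -> A f.
Proof. by case. Qed.

Lemma integrable_EFinD (f g : M -> R) : integrableR f -> integrableR g ->
  integrableR (fun x => f x + g x).
Proof.
move=> If Ig; apply: (eq_integrable measurableT _ _ _ (integrableD measurableT If Ig)) => x _ /=.
by rewrite EFinD.
Qed.

Lemma integrable_EFinZ (a : R) (f : M -> R) : integrableR f ->
  integrableR (fun x => a * f x).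
Proof.
move=> If; apply: (eq_integrable measurableT _ _ _ (integrableZl measurableT a If)) => x _ /=.
by rewrite EFinM.
Qed.

Lemma le_integrable_EFin (f g : M -> R) : measurable_fun setT f ->
  (forall x, `|f x| <= `|g x|) -> integrableR g -> integrableR f.
Proof.
move=> mf fg Ig; apply: (le_integrable measurableT _ _ Ig) => [|x _].
  exact/measurable_EFinP.
by rewrite lee_fin.
Qed.

Lemma integrable_sqr {f} : H f -> integrableR (fun x => f x ^+ 2).
Proof.
case=> Af f2_fin _ _; apply/integrableP; split.
  by apply/measurable_EFinP; apply: measurable_funX; exact: A_measurable.
rewrite (eq_integral (fun x => (f x ^+ 2)%:E)) // => x _ /=.
by rewrite ger0_norm ?sqr_ge0.
Qed.

Lemma integrable_Gamma_diag {f} : H f -> integrableR (Gamma L f f).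
Proof.
case=> Af _ _ Gf_fin; apply/integrableP; split.
  by apply/measurable_EFinP; exact: Gamma_measurable.
rewrite (eq_integral (fun x => (Gamma L f f x)%:E)) // => x _ /=.
by rewrite ger0_norm ?Gamma_ge0.
Qed.

Lemma integrable_H1 {f} : H f -> integrableR f.
Proof.
move=> Hf; apply: (@le_integrable_EFin _ (fun x => 1 + f x ^+ 2)).
- exact: A_measurable (H1_A Hf).
- move=> x; rewrite [X in _ <= X]ger0_norm ?addr_ge0 ?sqr_ge0 //.
  by have [f0|f0] := leP 0 (f x); [rewrite ger0_norm | rewrite ltr0_norm]; nra.
- exact: integrable_EFinD (finite_measure_integrable_cst nu 1 measurableT) (integrable_sqr Hf).
Qed.

Lemma integrable_mul {f g} : H f -> H g -> integrableR (fun x => f x * g x).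
Proof.
move=> Hf Hg; apply: (@le_integrable_EFin _ (fun x => f x ^+ 2 + g x ^+ 2)).
- by apply: measurable_funM; apply: A_measurable; [exact: H1_A Hf | exact: H1_A Hg].
- move=> x; rewrite [X in _ <= X]ger0_norm ?addr_ge0 ?sqr_ge0 //.
  by rewrite ler_norml; apply/andP; split; nra.
- exact: integrable_EFinD (integrable_sqr Hf) (integrable_sqr Hg).
Qed.

Lemma integrable_Gamma {f g} : H f -> H g -> integrableR (Gamma L f g).
Proof.
move=> Hf Hg; apply: (@le_integrable_EFin _ (fun x => Gamma L f f x + Gamma L g g x)).
- exact: Gamma_measurable (H1_A Hf) (H1_A Hg).
- move=> x; rewrite [X in _ <= X]ger0_norm; first exact: Gamma_norm_le (H1_A Hf) (H1_A Hg).
  by rewrite addr_ge0 // Gamma_ge0 //; [exact: H1_A Hf | exact: H1_A Hg].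
- exact: integrable_EFinD (integrable_Gamma_diag Hf) (integrable_Gamma_diag Hg).
Qed.

Lemma H1_add {f g} : H f -> H g -> H (f \+ g).
Proof.
move=> Hf Hg; have Af := H1_A Hf; have Ag := H1_A Hg.
split; first exact: A_add.
- apply: (integrable_lty measurableT).
  apply: (@le_integrable_EFin _ (fun x => 2 * (f x ^+ 2 + g x ^+ 2))).
  + by apply: measurable_funX; apply: measurable_funD; exact: A_measurable.
  + move=> x; rewrite /= ger0_norm ?sqr_ge0 // ger0_norm ?mulr_ge0 ?addr_ge0 ?sqr_ge0 //.
    by have := sqr_ge0 (f x - g x); rewrite !expr2; nra.
  + exact/integrable_EFinZ/integrable_EFinD/integrable_sqr/Hg/integrable_sqr.
- under eq_integral do rewrite EFinD.
  rewrite (integralD measurableT (integrable_H1 Hf) (integrable_H1 Hg)).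
  by case: Hf => _ _ -> _; case: Hg => _ _ -> _; rewrite adde0.
- apply: (integrable_lty measurableT).
  under eq_fun do rewrite GammaDD // -addrA.
  apply: integrable_EFinD; first exact: integrable_Gamma_diag.
  apply: integrable_EFinD; last exact: integrable_Gamma_diag.
  exact/integrable_EFinZ/integrable_Gamma.
Qed.

Lemma H1_scale (a : R) {f} : H f -> H (fun x => a * f x).
Proof.
move=> Hf; have Af := H1_A Hf.
split; first exact: A_scale.
- apply: (integrable_lty measurableT).
  under eq_fun do rewrite exprMn.
  exact/integrable_EFinZ/integrable_sqr.
- under eq_integral do rewrite EFinM.
  rewrite (integralZl measurableT (integrable_H1 Hf)).
  by case: Hf => _ _ -> _; rewrite mule0.
- apply: (integrable_lty measurableT).
  under eq_fun do rewrite GammaZZ //.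
  exact/integrable_EFinZ/integrable_Gamma_diag.
Qed.

Lemma H1_0 : H (fun _ => 0).
Proof.
have A0 := A_cst 0.
split => //.
- by under eq_integral do rewrite expr0n; rewrite integral0.
- by rewrite integral0.
- by under eq_integral do rewrite Gamma0l //; rewrite integral0.
Qed.

Lemma innerC f g : inner f g = inner g f.
Proof. by apply: eq_Rintegral => x _; rewrite mulrC. Qed.

Lemma inner_sqr f : inner f f = \int[nu]_x (f x ^+ 2).
Proof. by apply: eq_Rintegral => x _; rewrite expr2. Qed.

Lemma inner_ge0 f : 0 <= inner f f.
Proof. by apply: Rintegral_ge0 => x _; rewrite -expr2 sqr_ge0. Qed.

Lemma inner0l g : inner (fun _ => 0) g = 0.
Proof.
by rewrite /inner; under eq_Rintegral do rewrite mul0r; rewrite Rintegral_cst // mul0r.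
Qed.

Lemma innerDl {f g h} : H f -> H g -> H h -> inner (f \+ g) h = inner f h + inner g h.
Proof.
move=> Hf Hg Hh.
rewrite /inner -(RintegralD measurableT (integrable_mul Hf Hh) (integrable_mul Hg Hh)).
by apply: eq_Rintegral => x _ /=; rewrite mulrDl.
Qed.

Lemma innerZl (a : R) {f h} : H f -> H h -> inner (fun x => a * f x) h = a * inner f h.
Proof.
move=> Hf Hh; rewrite /inner -(RintegralZl a measurableT (integrable_mul Hf Hh)).
by apply: eq_Rintegral => x _ /=; rewrite mulrA.
Qed.

Lemma innerDD {f g} : H f -> H g ->
  inner (f \+ g) (f \+ g) = inner f f + 2 * inner f g + inner g g.
Proof.
move=> Hf Hg; have Hfg := H1_add Hf Hg.
rewrite innerDl // (innerC f) (innerC g) !innerDl // (innerC g f); ring.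
Qed.

Lemma dirichletC f g : dirichlet f g = dirichlet g f.
Proof. by rewrite /dirichlet Gamma_sym. Qed.

Lemma dirichlet_ge0 {f} : H f -> 0 <= dirichlet f f.
Proof. by move=> Hf; apply: Rintegral_ge0 => x _; apply: Gamma_ge0 _ (H1_A Hf). Qed.

Lemma dirichlet0l {h} : H h -> dirichlet (fun _ => 0) h = 0.
Proof.
move=> Hh; rewrite /dirichlet; under eq_Rintegral do rewrite (Gamma0l _ (H1_A Hh)).
by rewrite Rintegral_cst // mul0r.
Qed.

Lemma dirichletDl {f g h} : H f -> H g -> H h ->
  dirichlet (f \+ g) h = dirichlet f h + dirichlet g h.
Proof.
move=> Hf Hg Hh.
rewrite /dirichlet -(RintegralD measurableT (integrable_Gamma Hf Hh) (integrable_Gamma Hg Hh)).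
by apply: eq_Rintegral => x _; rewrite GammaDl //; apply: H1_A.
Qed.

Lemma dirichletZl (a : R) {f h} : H f -> H h ->
  dirichlet (fun x => a * f x) h = a * dirichlet f h.
Proof.
move=> Hf Hh; rewrite /dirichlet -(RintegralZl a measurableT (integrable_Gamma Hf Hh)).
by apply: eq_Rintegral => x _; rewrite GammaZl //; apply: H1_A.
Qed.

Lemma dirichletDD {f g} : H f -> H g ->
  dirichlet (f \+ g) (f \+ g) = dirichlet f f + 2 * dirichlet f g + dirichlet g g.
Proof.
move=> Hf Hg; have Hfg := H1_add Hf Hg.
rewrite dirichletDl // (dirichletC f) (dirichletC g) !dirichletDl //.
rewrite (dirichletC g f); ring.
Qed.

Local Notation E := (Espace A L nu).

Lemma SpE0 F : SpE A L nu F (fun _ => 0).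
Proof.
split; first exact: H1_0.
split; first by move=> e _; exact: inner0l.
move=> g Hg _; change (dirichlet (fun _ => 0) g = lamE A L nu F * inner (fun _ => 0) g).
by rewrite dirichlet0l // inner0l mulr0.
Qed.

Lemma Espace0 m : E m (fun _ => 0).
Proof.
elim: m => [//|m IH] /=; exists (fun _ => 0) => //; exists (fun _ => 0).
  exact: SpE0.
by apply/funext => x /=; rewrite addr0.
Qed.

Lemma Espace_H1 m : E m `<=` H.
Proof.
elim: m => [e /= ->|m IH e [e1 He1 [s [Hs _] <-]]]; first exact: H1_0.
exact: H1_add (IH _ He1) Hs.
Qed.

Lemma Espace_mono {m n} : (m <= n)%N -> E m `<=` E n.
Proof.
move=> /subnK <-; elim: (n - m)%N => [|j IH] e Ee //=.
exists e; first exact: IH.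
by exists (fun _ => 0); [exact: SpE0 | apply/funext => x /=; rewrite addr0].
Qed.

Lemma SpE_Espace {m s} : SpE A L nu (E m) s -> E m.+1 s.
Proof.
move=> Hs; exists (fun _ => 0); first exact: Espace0.
by exists s => //; apply/funext => x /=; rewrite add0r.
Qed.

Lemma orth_Espace_mono {m n h} : (m <= n)%N -> orth nu (E n) h -> orth nu (E m) h.
Proof. by move=> mn Oh e Ee; apply: Oh; exact: Espace_mono mn _ Ee. Qed.

Lemma orthD {F : set (M -> R)} {f g} : F `<=` H -> H f -> H g ->
  orth nu F f -> orth nu F g -> orth nu F (f \+ g).
Proof.
move=> FH Hf Hg Of Og e Fe; have fe0 : inner f e = 0 := Of e Fe.
have ge0 : inner g e = 0 := Og e Fe.
by change (inner (f \+ g) e = 0); rewrite (innerDl Hf Hg (FH _ Fe)) fe0 ge0 addr0.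
Qed.

Lemma orthZ {F : set (M -> R)} (a : R) {f} : F `<=` H -> H f ->
  orth nu F f -> orth nu F (fun x => a * f x).
Proof.
move=> FH Hf Of e Fe; have fe0 : inner f e = 0 := Of e Fe.
by change (inner (fun x => a * f x) e = 0); rewrite (innerZl a Hf (FH _ Fe)) fe0 mulr0.
Qed.

Definition Rayleigh_quotients (F : set (M -> R)) : set R :=
  [set \int[nu]_x (Gamma L f f x) / \int[nu]_x (f x ^+ 2) |
       f in [set f | H f /\ orth nu F f /\ (0 < \int[nu]_x (f x ^+ 2)%:E)%E]].

Lemma Rayleigh_quotients_ge0 F : lbound (Rayleigh_quotients F) 0.
Proof.
move=> _ [f [Hf _] <-]; apply: divr_ge0; last by apply: Rintegral_ge0 => x _; exact: sqr_ge0.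
exact: dirichlet_ge0.
Qed.

(* When no admissible [f] exists, [lamE F] is [inf set0 = 0]. *)
Lemma lamE_ge0 F : 0 <= lamE A L nu F.
Proof.
have [[r Fr]|nF] := pselect (exists r, Rayleigh_quotients F r).
  by apply: lb_le_inf (Rayleigh_quotients_ge0 F); exists r.
rewrite /lamE -/(Rayleigh_quotients F) (_ : Rayleigh_quotients F = set0) ?inf0 //.
by apply/seteqP; split => r // Fr; apply: nF; exists r.
Qed.

Lemma lamE_inner_le_dirichlet F f : H f -> orth nu F f ->
  lamE A L nu F * inner f f <= dirichlet f f.
Proof.
move=> Hf Of; rewrite inner_sqr.
have [f2_le0|f2_gt0] := leP (\int[nu]_x (f x ^+ 2)%:E)%E 0%E.
  have f2_0 : (\int[nu]_x (f x ^+ 2)%:E = 0)%E.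
    by apply/eqP; rewrite eq_le f2_le0 integral_ge0 // => x _; rewrite lee_fin sqr_ge0.
  by rewrite /Rintegral f2_0 mulr0; exact: dirichlet_ge0.
have f2_pos : 0 < \int[nu]_x (f x ^+ 2) by apply: fine_gt0; rewrite f2_gt0; case: Hf.
rewrite -ler_pdivlMr //; apply: ge_inf; first by exists 0; exact: Rayleigh_quotients_ge0.
by exists f.
Qed.

Definition excess (F : set (M -> R)) (f g : M -> R) :=
  dirichlet f g - lamE A L nu F * inner f g.

Lemma Rintegral_lamE_sub_Gamma F {f g} : H f -> H g ->
  \int[nu]_x (lamE A L nu F * f x * g x - Gamma L f g x) = - excess F f g.
Proof.
move=> Hf Hg; under eq_Rintegral do rewrite -mulrA.
rewrite RintegralB //; last exact: integrable_Gamma.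
  by rewrite RintegralZl ?opprB //; exact: integrable_mul.
exact/integrable_EFinZ/integrable_mul.
Qed.

Lemma excess_ge0 F {f} : H f -> orth nu F f -> 0 <= excess F f f.
Proof. by move=> Hf Of; rewrite subr_ge0; exact: lamE_inner_le_dirichlet. Qed.

Lemma excess_le_dirichlet F f : excess F f f <= dirichlet f f.
Proof. by rewrite lerBlDr lerDl mulr_ge0 ?lamE_ge0 ?inner_ge0. Qed.

Lemma sqr_le_mul_of_quadratic_ge0 (a b c : R) : 0 <= c ->
  (forall t, 0 <= a + 2 * t * b + t ^+ 2 * c) -> b ^+ 2 <= a * c.
Proof.
move=> c_ge0 q_ge0; have [c_gt0|] := ltP 0 c.
  have := mulr_ge0 (ltW c_gt0) (q_ge0 (- b / c)).
  have -> : c * (a + 2 * (- b / c) * b + (- b / c) ^+ 2 * c) = a * c - b ^+ 2.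
    by field; rewrite gt_eqF.
  by rewrite subr_ge0.
move=> c_le0; have c0 : c = 0 by apply/le_anti/andP.
rewrite c0 mulr0; have [-> |b_neq0] := eqVneq b 0; first by rewrite expr0n.
have := q_ge0 (- (a + 1) / (2 * b)).
have -> : a + 2 * (- (a + 1) / (2 * b)) * b + (- (a + 1) / (2 * b)) ^+ 2 * c = - 1.
  by rewrite c0; field.
by rewrite oppr_ge0 ler10.
Qed.

Lemma excess_cauchy_schwarz F {f g} : F `<=` H -> H f -> H g ->
  orth nu F f -> orth nu F g -> excess F f g ^+ 2 <= excess F f f * excess F g g.
Proof.
move=> FH Hf Hg Of Og.
have Qgg_ge0 := excess_ge0 F Hg Og.
apply: sqr_le_mul_of_quadratic_ge0; first exact: Qgg_ge0.
move=> t; have Htg := H1_scale t Hg.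
have := excess_ge0 F (H1_add Hf Htg) (orthD FH Hf Htg Of (orthZ t FH Hg Og)).
rewrite /excess innerDD // dirichletDD // !innerZl // !dirichletZl //.
rewrite ![inner _ (fun x => t * g x)]innerC ![dirichlet _ (fun x => t * g x)]dirichletC.
rewrite !innerZl // !dirichletZl // [inner g f]innerC [dirichlet g f]dirichletC.
lra.
Qed.

Lemma SpE_dirichlet {F s g} : SpE A L nu F s -> H g -> orth nu F g ->
  dirichlet s g = lamE A L nu F * inner s g.
Proof. by case=> _ [_ eig]; exact: eig. Qed.

Section Projection.
Variables (m : nat) (p : nat -> M -> R).
Hypothesis hp : forall i, (1 <= i < m.+1)%N -> Sp A L nu i (p i).

Definition psum n : M -> R := fun x => \sum_(1 <= i < n.+1) p i x.

Lemma psum0 : psum 0 = fun _ => 0.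
Proof. by apply/funext => x; rewrite /psum big_geq. Qed.

Lemma psumS n : psum n.+1 = psum n \+ p n.+1.
Proof. by apply/funext => x; rewrite /psum /= big_nat_recr. Qed.

Lemma Sp_component {n} : (n < m)%N -> SpE A L nu (E n) (p n.+1).
Proof. by move=> nm; apply: hp; rewrite ltnS. Qed.

Lemma psum_Espace {n} : (n <= m)%N -> E n (psum n).
Proof.
elim: n => [_|n IH nm]; first by rewrite psum0; exact: Espace0.
rewrite psumS; exists (psum n); first exact: IH (ltnW nm).
by exists (p n.+1); first exact: Sp_component.
Qed.

Lemma psum_H1 {n} : (n <= m)%N -> H (psum n).
Proof. by move=> nm; apply: (Espace_H1 n); exact: psum_Espace. Qed.

Lemma dirichlet_psum_orth {n h} : (n <= m)%N -> H h -> orth nu (E n) h ->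
  dirichlet (psum n) h = 0.
Proof.
elim: n => [_|n IH nm] Hh Oh; first by rewrite psum0 dirichlet0l.
have Sp_n := Sp_component nm; have [Hp _] := Sp_n.
have Oh' := orth_Espace_mono (leqnSn n) Oh.
have Hs := psum_H1 (ltnW nm).
rewrite psumS dirichletDl // (IH (ltnW nm) Hh Oh') add0r.
rewrite (SpE_dirichlet Sp_n Hh Oh') innerC.
by rewrite [inner h _](Oh _ (SpE_Espace Sp_n)) mulr0.
Qed.

Lemma inner_psum {n} : (n <= m)%N ->
  inner (psum n) (psum n) = \sum_(1 <= i < n.+1) inner (p i) (p i).
Proof.
elim: n => [_|n IH nm]; first by rewrite psum0 inner0l big_geq.
have [Hp [Op _]] := Sp_component nm.
have cross : inner (psum n) (p n.+1) = 0.
  by rewrite innerC; exact: Op _ (psum_Espace (ltnW nm)).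
have Hs := psum_H1 (ltnW nm).
rewrite psumS innerDD // (IH (ltnW nm)) cross.
by rewrite mulr0 addr0 [RHS]big_nat_recr.
Qed.

Lemma dirichlet_psum {n} : (n <= m)%N ->
  dirichlet (psum n) (psum n) = \sum_(1 <= i < n.+1) lam_nu A L nu i * inner (p i) (p i).
Proof.
elim: n => [_|n IH nm]; first by rewrite psum0 dirichlet0l ?big_geq //; exact: H1_0.
have Sp_n := Sp_component nm; have [Hp [Op _]] := Sp_n.
have p_eig : dirichlet (p n.+1) (p n.+1) = lam_nu A L nu n.+1 * inner (p n.+1) (p n.+1).
  exact: SpE_dirichlet Sp_n Hp Op.
have Hs := psum_H1 (ltnW nm).
rewrite psumS dirichletDD // (IH (ltnW nm)) (dirichlet_psum_orth (ltnW nm) Hp Op) p_eig.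
by rewrite mulr0 addr0 [RHS]big_nat_recr.
Qed.

Variable fk : M -> R.
Let pperp := fun x => fk x - psum m x.

Lemma pperp_H1 : H fk -> H pperp.
Proof.
move=> Hfk; have -> : pperp = fk \+ (fun x => -1 * psum m x).
  by apply/funext => x; rewrite /pperp /= mulN1r.
exact: H1_add Hfk (H1_scale _ (psum_H1 (leqnn m))).
Qed.

Lemma excess_pperp_le (lmk : R) : H fk -> inner fk fk = 1 -> dirichlet fk fk <= lmk ->
  orth nu (E m) pperp ->
  excess (E m) pperp pperp <= lmk - lam_nu A L nu m.+1
    + \sum_(1 <= i < m.+1) (lam_nu A L nu m.+1 - lam_nu A L nu i) * inner (p i) (p i).
Proof.
move=> Hfk fk_unit fk_energy pperp_orth.
have Hpp := pperp_H1 Hfk; have Hs := psum_H1 (leqnn m).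
have fk_split : fk = pperp \+ psum m by apply/funext => x; rewrite /pperp /= subrK.
have cross_inner : inner pperp (psum m) = 0 := pperp_orth _ (psum_Espace (leqnn m)).
have cross_dirichlet : dirichlet pperp (psum m) = 0.
  by rewrite dirichletC; exact: dirichlet_psum_orth.
move: fk_unit fk_energy; rewrite fk_split innerDD // dirichletDD //.
rewrite cross_inner cross_dirichlet inner_psum ?dirichlet_psum //.
set lam := lam_nu A L nu m.+1; rewrite /excess; change (lamE A L nu (E m)) with lam.
set S1 := \sum_(1 <= i < m.+1) inner (p i) (p i).
set S2 := \sum_(1 <= i < m.+1) lam_nu A L nu i * inner (p i) (p i).
have -> : \sum_(1 <= i < m.+1) (lam - lam_nu A L nu i) * inner (p i) (p i) = lam * S1 - S2.
  by rewrite mulr_sumr -sumrB; apply: eq_bigr => i _; rewrite mulrBl.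
move=> pperp_unit pperp_energy.
have -> : inner pperp pperp = 1 - S1 by lra.
rewrite mulrBr mulr1; lra.
Qed.

End Projection.

End MarkovGenerator.

Arguments dirichlet {d M R} L nu f g.

Lemma normr_le_sqrtM {R : rcfType} (x a a' b b' : R) : x ^+ 2 <= a * b ->
  0 <= a <= a' -> 0 <= b <= b' -> `|x| <= Num.sqrt a' * Num.sqrt b'.
Proof.
move=> xab /andP[a_ge0 aa'] /andP[b_ge0 bb'].
rewrite -sqrtr_sqr -sqrtrM ?(le_trans a_ge0) // ler_wsqrtr //.
by apply: le_trans xab _; exact: ler_pM.
Qed.

Theorem mainTheorem2 (d : measure_display) (M : measurableType d) (R : realType)
  (A : set (M -> R)) (L : (M -> R) -> (M -> R)) (mu nu : probability M R)
  (k : nat) (lam_mu : nat -> R) (fk : M -> R) :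
  (1 <= k)%N ->
  markov_generator A L ->
  reversible A L mu ->
  first_eigenvalues A L mu k lam_mu ->
  eigenfun A L mu (lam_mu k) fk ->
  (\int[mu]_x (fk x)%:E = 0)%E ->
  (\int[mu]_x (fk x ^+ 2)%:E = 1)%E ->
  (\int[nu]_x (fk x)%:E = 0)%E ->
  (\int[nu]_x (fk x ^+ 2)%:E = 1)%E ->
  (\int[nu]_x (Gamma L fk fk x)%:E <= (lam_mu k)%:E)%E ->
  forall p : nat -> (M -> R),
    (forall i, (1 <= i < k)%N -> Sp A L nu i (p i)) ->
    let pperp := fun x => fk x - \sum_(1 <= i < k) p i x in
    orth nu (Espace A L nu k.-1) pperp ->
    forall g : M -> R, H1 A L nu g -> orth nu (Espace A L nu k.-1) g ->
      `| \int[nu]_x (lam_nu A L nu k * pperp x * g x - Gamma L pperp g x) |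
      <= Num.sqrt (lam_mu k - lam_nu A L nu k
             + \sum_(1 <= i < k) (lam_nu A L nu k - lam_nu A L nu i)
                                  * \int[nu]_x (p i x ^+ 2))
         * Num.sqrt (\int[nu]_x (Gamma L g g x)).
Proof.
case: k => [//|m] _ hL _ _ [Afk _ _ _] _ _ fk_mean fk_sqr fk_energy p hp pperp pperp_orth
  g Hg g_orth.
have Hfk : H1 A L nu fk.
  by split; rewrite // ?fk_sqr ?ltry //; exact: le_lt_trans fk_energy (ltry _).
have fk_unit : inner nu fk fk = 1 by rewrite inner_sqr /Rintegral fk_sqr.
have fk_dirichlet : dirichlet L nu fk fk <= lam_mu m.+1.
  rewrite -lee_fin /dirichlet /Rintegral fineK //.
  by apply: (integrable_fin_num measurableT); exact: (integrable_Gamma_diag hL nu Hfk).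
have Hpp : H1 A L nu pperp := pperp_H1 hL nu m p hp fk Hfk.
rewrite (Rintegral_lamE_sub_Gamma hL nu (Espace A L nu m)) // normrN.
under eq_bigr do rewrite -inner_sqr.
have CS := excess_cauchy_schwarz hL nu _ (Espace_H1 hL nu m) Hpp Hg pperp_orth g_orth.
apply: normr_le_sqrtM CS _ _.
- by rewrite (excess_ge0 hL nu) ?(excess_pperp_le hL nu m p hp fk).
- by rewrite (excess_ge0 hL nu) ?excess_le_dirichlet.
Qed.
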